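(* Let $b$ be a real number with $|b|>1$, let $r$ be a nonnegative integer, and let $(b_n)_{n\ge1}$ be a real sequence with $b_n\to b$. Then $$\lim_{n\to\infty}\frac1n\,{}_4F_3\!\left[\begin{matrix}1,\ n+\frac12,\ 1-n,\ b_nn+r\\ n+1,\ \frac32-n,\ b_nn+r+1\end{matrix};1\right]=\frac{2b}{b+1}\sqrt{\frac{b+1}{b-1}}\arctan\Big(\sqrt{\frac{b-1}{b+1}}\Big).$$
   Context: ${}_pF_q\left[\begin{matrix}a_1,\dots,a_p\\ b_1,\dots,b_q\end{matrix};z\right]=\sum_{k\ge0}\frac{(a_1)_k\cdots(a_p)_k}{(b_1)_k\cdots(b_q)_k}\frac{z^k}{k!}$ with $(a)_k=a(a+1)\cdots(a+k-1)$, $(a)_0=1$; here the series terminates because of the numerator parameter $1-n$, i.e. it is the finite sum over $0\le k\le n-1$. *)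

From Stdlib Require Import Reals List Arith Factorial.
Open Scope R_scope.

Fixpoint poch (a : R) (k : nat) : R :=
  match k with
  | O => 1
  | S k' => poch a k' * (a + INR k')
  end.

Definition F43_trunc (a1 a2 a3 a4 b1 b2 b3 z : R) (N : nat) : R :=
  fold_right Rplus 0
    (map (fun k => poch a1 k * poch a2 k * poch a3 k * poch a4 k
                   / (poch b1 k * poch b2 k * poch b3 k)
                   * z ^ k / INR (fact k))
         (seq 0 N)).

(* Write c = b_n n + r and beta = c / n.  For k < n the k-th term of the 4F3
   equals W(n,k) c / (c + k), where W(n,k) is a ratio of four Wallis numbers
   w_m = (1/2)_m / m! (f43_term_closed).  Hence (f43_as_riemann_sum)

     (1/n) 4F3 = sum_{k<n} s_{n,k} phi_beta (k/n),
     s_{n,k} = W(n,k)/n,    phi_beta(y) = beta / (beta + y).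

   Wallis' inequalities (m w_m^2 increases, (m + 1/2) w_m^2 decreases) squeeze
   each step s_{n,k} between consecutive increments of the arcsine grid
   theta_k = asin (k/n) (step_lower, step_upper), so the partial sums S_k of
   the steps satisfy sin S_k = k/n + O(n^{-1/2}) and S_n = pi/2 + O(n^{-1/2}).
   The sum is thus a Riemann sum of phi_b (sin t) over [0, pi/2] with mesh
   O(n^{-1/2}).  With the explicit antiderivative
   G_b(t) = (2b/s_b) atan((b tan(t/2) + 1)/s_b), s_b = sqrt(b^2 - 1), we get
   |(1/n) 4F3 - (G_b(pi/2) - G_b(0))| <= C1 |beta - b| + C2 n^{-1/2}
   (f43_error_bound).  The theorem follows since beta -> b, and
   G_b(pi/2) - G_b(0) is the stated closed form (antider_endpoints). *)

From Stdlib Require Import Reals Lra Lia Psatz List Factorial.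
From Coquelicot Require Import Coquelicot.
Open Scope R_scope.

Fixpoint sum_upto (f : nat -> R) (N : nat) : R :=
  match N with O => 0 | S N' => sum_upto f N' + f N' end.

Lemma fold_right_Rplus_shift (l : list R) (a : R) :
  fold_right Rplus a l = a + fold_right Rplus 0 l.
Proof. induction l; simpl; [lra | rewrite IHl; lra]. Qed.

Lemma fold_right_map_seq (f : nat -> R) (N : nat) :
  fold_right Rplus 0 (map f (seq 0 N)) = sum_upto f N.
Proof.
  induction N; [reflexivity |].
  rewrite seq_S, map_app, fold_right_app; simpl.
  rewrite fold_right_Rplus_shift, IHN. lra.
Qed.

Lemma sum_upto_ext (f g : nat -> R) (N : nat) :
  (forall k, (k < N)%nat -> f k = g k) -> sum_upto f N = sum_upto g N.
Proof.
  induction N; intros H; simpl; auto.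
  rewrite IHN by (intros; apply H; lia). rewrite H by lia. reflexivity.
Qed.

Lemma sum_upto_scal (f : nat -> R) (e : R) (N : nat) :
  sum_upto (fun k => e * f k) N = e * sum_upto f N.
Proof. induction N; simpl; [ring | rewrite IHN; ring]. Qed.

Lemma sum_upto_minus (f g : nat -> R) (N : nat) :
  sum_upto f N - sum_upto g N = sum_upto (fun k => f k - g k) N.
Proof. induction N; simpl; lra. Qed.

Lemma sum_upto_abs_le (f g : nat -> R) (N : nat) :
  (forall k, (k < N)%nat -> Rabs (f k) <= g k) -> Rabs (sum_upto f N) <= sum_upto g N.
Proof.
  induction N; intros H; simpl.
  - rewrite Rabs_R0; lra.
  - eapply Rle_trans; [apply Rabs_triang |].
    specialize (IHN (fun k Hk => H k ltac:(lia))). specialize (H N ltac:(lia)). lra.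
Qed.

Lemma sum_upto_telescope (g : nat -> R) (N : nat) :
  sum_upto (fun k => g (S k) - g k) N = g N - g 0%nat.
Proof. induction N; simpl; [ring | rewrite IHN; ring]. Qed.

(* A sum whose terms are close to the increments of g is close to the total
   increment of g: the discrete form of "Riemann sum vs. integral". *)
Lemma sum_upto_near_telescope (a g v : nat -> R) (e : R) (N : nat) :
  (forall k, (k < N)%nat -> Rabs (a k - (g (S k) - g k)) <= e * v k) ->
  Rabs (sum_upto a N - (g N - g 0%nat)) <= e * sum_upto v N.
Proof.
  intros H. rewrite <- sum_upto_telescope, sum_upto_minus, <- sum_upto_scal.
  apply sum_upto_abs_le. auto.
Qed.

Lemma poch_neq0 (a : R) (k : nat) :
  (forall j, (j < k)%nat -> a + INR j <> 0) -> poch a k <> 0.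
Proof.
  induction k; intros H; simpl; [lra |].
  apply Rmult_integral_contrapositive; split.
  - apply IHk; intros j Hj; apply H; lia.
  - apply H; lia.
Qed.

(* A half-integer is never zero; this keeps the parameter 3/2 - n harmless. *)
Lemma half_integer_neq0 (n j : nat) : 3/2 - INR n + INR j <> 0.
Proof.
  intro E. assert (E2 : INR (2 * n) = INR (2 * j + 3)).
  { rewrite mult_INR, plus_INR, mult_INR. simpl. lra. }
  apply INR_eq in E2. lia.
Qed.

(* The Wallis numbers w_m = (1/2)_m / m! = C(2m, m) / 4^m. *)
Fixpoint wallis (m : nat) : R :=
  match m with
  | O => 1
  | S m' => wallis m' * (2 * INR m' + 1) / (2 * INR m' + 2)
  end.

Lemma wallis_pos (m : nat) : 0 < wallis m.
Proof.
  induction m; simpl; [lra |].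
  pose proof (pos_INR m).
  apply Rdiv_lt_0_compat; [apply Rmult_lt_0_compat |]; lra.
Qed.

Definition f43_term (n : nat) (c : R) (k : nat) : R :=
  poch 1 k * poch (INR n + /2) k * poch (1 - INR n) k * poch c k
  / (poch (INR n + 1) k * poch (3/2 - INR n) k * poch (c + 1) k)
  * 1 ^ k / INR (fact k).

(* The c-independent part of the summand, as a ratio of Wallis numbers:
   (n + 1/2)_k (1 - n)_k / ((n + 1)_k (3/2 - n)_k). *)
Definition weight (n k : nat) : R :=
  wallis (n + k) * wallis (n - 1 - k) / (wallis n * wallis (n - 1)).

Lemma f43_term_succ (n : nat) (c : R) (k : nat) :
  (forall j, (1 <= j <= S k)%nat -> c + INR j <> 0) ->
  f43_term n c (S k) = f43_term n c k *
    ((INR n + /2 + INR k) * (1 - INR n + INR k) * (c + INR k)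
     / ((INR n + 1 + INR k) * (3/2 - INR n + INR k) * (c + 1 + INR k))).
Proof.
  intros Hc. unfold f43_term. cbn [poch]. rewrite fact_simpl, mult_INR.
  assert (Hc1 : forall j, (j <= k)%nat -> c + 1 + INR j <> 0).
  { intros j Hj. replace (c + 1 + INR j) with (c + INR (S j)) by (rewrite S_INR; lra).
    apply Hc; lia. }
  pose proof (pos_INR n); pose proof (pos_INR k).
  assert (poch (INR n + 1) k <> 0).
  { apply poch_neq0. intros j _. pose proof (pos_INR j); lra. }
  assert (poch (3/2 - INR n) k <> 0) by (apply poch_neq0; intros; apply half_integer_neq0).
  assert (poch (c + 1) k <> 0) by (apply poch_neq0; intros; apply Hc1; lia).
  assert (INR (fact k) <> 0) by (apply not_0_INR, fact_neq_0).
  assert (INR (S k) <> 0) by (apply not_0_INR; lia).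
  pose proof (half_integer_neq0 n k). pose proof (Hc1 k (le_n k)).
  rewrite S_INR in *. simpl pow. field. repeat split; auto; lra.
Qed.

Lemma weight_succ (n k : nat) : (S k < n)%nat ->
  weight n (S k) = weight n k *
    ((2 * INR n + 2 * INR k + 1) * (2 * INR n - 2 * INR k - 2)
     / ((2 * INR n + 2 * INR k + 2) * (2 * INR n - 2 * INR k - 3))).
Proof.
  intros Hk. unfold weight.
  replace (n + S k)%nat with (S (n + k)) by lia.
  replace (n - 1 - k)%nat with (S (n - 1 - S k)) by lia.
  cbn [wallis]. rewrite !minus_INR, plus_INR, (S_INR k) by lia. change (INR 1) with 1.
  assert (HkR : INR k + 2 <= INR n).
  { replace (INR k + 2) with (INR (S (S k))) by (rewrite !S_INR; lra). apply le_INR; lia. }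
  pose proof (pos_INR k).
  pose proof (wallis_pos (n + k)); pose proof (wallis_pos (n - 1 - S k));
  pose proof (wallis_pos n); pose proof (wallis_pos (n - 1)).
  field. repeat split; lra.
Qed.

Lemma f43_term_closed (n : nat) (c : R) (k : nat) : (k < n)%nat ->
  (forall j, (j <= k)%nat -> c + INR j <> 0) ->
  f43_term n c k = weight n k * (c / (c + INR k)).
Proof.
  intros Hk Hc. induction k as [|k IH].
  - assert (c + 0 <> 0) by (apply (Hc 0%nat); lia).
    unfold f43_term, weight. simpl. rewrite Nat.add_0_r, Nat.sub_0_r.
    pose proof (wallis_pos n); pose proof (wallis_pos (n - 1)).
    field. repeat split; lra.
  - rewrite f43_term_succ by (intros; apply Hc; lia).
    rewrite weight_succ by exact Hk.
    rewrite IH by (lia || (intros; apply Hc; lia)).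
    assert (Hck : c + INR k <> 0) by (apply Hc; lia).
    assert (Hck1 : c + INR (S k) <> 0) by (apply Hc; lia).
    assert (HkR : INR k + 2 <= INR n).
    { replace (INR k + 2) with (INR (S (S k))) by (rewrite !S_INR; lra). apply le_INR; lia. }
    pose proof (half_integer_neq0 n k). pose proof (pos_INR k).
    rewrite S_INR in *. field. repeat split; lra.
Qed.

Lemma wallis_S (m : nat) :
  wallis (S m) = wallis m * ((2 * INR m + 1) / (2 * INR m + 2)).
Proof. simpl. unfold Rdiv. ring. Qed.

Lemma wallis_scaled_step (m : nat) :
  INR m * wallis m ^ 2 <= INR (S m) * wallis (S m) ^ 2.
Proof.
  rewrite wallis_S, S_INR. pose proof (pos_INR m). pose proof (wallis_pos m).
  set (x := INR m) in *. set (v := wallis m) in *.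
  set (q := (2 * x + 1) / (2 * x + 2)).
  assert (Hq : q * (2 * x + 2) = 2 * x + 1) by (unfold q; field; lra).
  assert (0 < q) by (unfold q; apply Rdiv_lt_0_compat; lra).
  assert (E : 4 * (x + 1) * ((x + 1) * q ^ 2 - x) = 1).
  { replace (4 * (x + 1) * ((x + 1) * q ^ 2 - x))
      with ((q * (2 * x + 2)) ^ 2 - 4 * x * (x + 1)) by ring.
    rewrite Hq. ring. }
  assert (0 <= (x + 1) * q ^ 2 - x).
  { destruct (Rle_lt_dec 0 ((x + 1) * q ^ 2 - x)); auto. nra. }
  nra.
Qed.

Lemma wallis_shifted_step (m : nat) :
  (INR (S m) + /2) * wallis (S m) ^ 2 <= (INR m + /2) * wallis m ^ 2.
Proof.
  rewrite wallis_S, S_INR. pose proof (pos_INR m). pose proof (wallis_pos m).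
  set (x := INR m) in *. set (v := wallis m) in *.
  set (q := (2 * x + 1) / (2 * x + 2)).
  assert (Hq : q * (2 * x + 2) = 2 * x + 1) by (unfold q; field; lra).
  assert (0 < q) by (unfold q; apply Rdiv_lt_0_compat; lra).
  assert ((x + 1 + /2) * q ^ 2 <= x + /2).
  { assert (E : 2 * (2 * x + 2) ^ 2 * ((x + 1 + /2) * q ^ 2)
                = (2 * x + 3) * (2 * x + 1) ^ 2).
    { replace (2 * (2 * x + 2) ^ 2 * ((x + 1 + /2) * q ^ 2))
        with ((2 * x + 3) * (q * (2 * x + 2)) ^ 2) by field.
      rewrite Hq. ring. }
    nra. }
  nra.
Qed.

Lemma wallis_scaled_mono (p q : nat) : (p <= q)%nat ->
  INR p * wallis p ^ 2 <= INR q * wallis q ^ 2.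
Proof.
  induction 1; [lra |]. eapply Rle_trans; [apply IHle | apply wallis_scaled_step].
Qed.

Lemma wallis_shifted_anti (p q : nat) : (p <= q)%nat ->
  (INR q + /2) * wallis q ^ 2 <= (INR p + /2) * wallis p ^ 2.
Proof.
  induction 1; [lra |]. eapply Rle_trans; [apply wallis_shifted_step | apply IHle].
Qed.

Lemma weight_pos (n k : nat) : 0 < weight n k.
Proof.
  unfold weight.
  pose proof (wallis_pos (n + k)); pose proof (wallis_pos (n - 1 - k));
  pose proof (wallis_pos n); pose proof (wallis_pos (n - 1)).
  apply Rdiv_lt_0_compat; apply Rmult_lt_0_compat; auto.
Qed.

Lemma weight_sq (n k : nat) : weight n k ^ 2 =
  (wallis (n + k) ^ 2 * wallis (n - 1 - k) ^ 2) / (wallis n ^ 2 * wallis (n - 1) ^ 2).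
Proof.
  unfold weight. pose proof (wallis_pos n); pose proof (wallis_pos (n - 1)).
  field. lra.
Qed.

Lemma weight_lower (n k : nat) : (k < n)%nat ->
  INR n * (INR n - /2) <= weight n k ^ 2 * ((INR n + INR k) * (INR n - INR k - /2)).
Proof.
  intros Hk. rewrite weight_sq.
  pose proof (wallis_scaled_mono n (n + k) ltac:(lia)) as h1.
  pose proof (wallis_shifted_anti (n - 1 - k) (n - 1) ltac:(lia)) as h2.
  rewrite plus_INR in h1. rewrite !minus_INR in h2 by lia. simpl INR in h2.
  pose proof (wallis_pos (n + k)); pose proof (wallis_pos (n - 1 - k));
  pose proof (wallis_pos n); pose proof (wallis_pos (n - 1)).
  assert (HkR : INR k + 1 <= INR n) by (rewrite <- S_INR; apply le_INR; lia).
  pose proof (pos_INR k).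
  set (X := wallis (n + k) ^ 2) in *. set (Y := wallis (n - 1 - k) ^ 2) in *.
  set (Z := wallis n ^ 2) in *. set (V := wallis (n - 1) ^ 2) in *.
  assert (0 < Z) by (unfold Z; nra). assert (0 < V) by (unfold V; nra).
  assert (0 < X) by (unfold X; nra). assert (0 < Y) by (unfold Y; nra).
  replace (X * Y / (Z * V) * ((INR n + INR k) * (INR n - INR k - / 2)))
    with (((INR n + INR k) * X) * ((INR n - INR k - /2) * Y) / (Z * V)) by (field; lra).
  apply -> Rle_div_r; [| nra].
  replace (INR n * (INR n - / 2) * (Z * V)) with ((INR n * Z) * ((INR n - /2) * V)) by ring.
  apply Rmult_le_compat; nra.
Qed.

Lemma weight_upper (n k : nat) : (k + 2 <= n)%nat ->
  weight n k ^ 2 * ((INR n + INR k + /2) * (INR n - INR k - 1)) <= (INR n + /2) * (INR n - 1).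
Proof.
  intros Hk. rewrite weight_sq.
  pose proof (wallis_shifted_anti n (n + k) ltac:(lia)) as h1.
  pose proof (wallis_scaled_mono (n - 1 - k) (n - 1) ltac:(lia)) as h2.
  rewrite plus_INR in h1. rewrite !minus_INR in h2 by lia. simpl INR in h2.
  pose proof (wallis_pos (n + k)); pose proof (wallis_pos (n - 1 - k));
  pose proof (wallis_pos n); pose proof (wallis_pos (n - 1)).
  assert (HkR : INR k + 2 <= INR n).
  { replace (INR k + 2) with (INR (S (S k))) by (rewrite !S_INR; lra). apply le_INR; lia. }
  pose proof (pos_INR k).
  set (X := wallis (n + k) ^ 2) in *. set (Y := wallis (n - 1 - k) ^ 2) in *.
  set (Z := wallis n ^ 2) in *. set (V := wallis (n - 1) ^ 2) in *.
  assert (0 < Z) by (unfold Z; nra). assert (0 < V) by (unfold V; nra).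
  assert (0 < X) by (unfold X; nra). assert (0 < Y) by (unfold Y; nra).
  replace (X * Y / (Z * V) * ((INR n + INR k + / 2) * (INR n - INR k - 1)))
    with (((INR n + INR k + /2) * X) * ((INR n - INR k - 1) * Y) / (Z * V)) by (field; lra).
  apply <- Rle_div_l; [| nra].
  replace ((INR n + / 2) * (INR n - 1) * (Z * V))
    with (((INR n + /2) * Z) * ((INR n - 1) * V)) by ring.
  apply Rmult_le_compat; nra.
Qed.

Lemma weight_last (n : nat) : (2 <= n)%nat -> weight n (n - 1) ^ 2 <= 4 * (INR n - 1).
Proof.
  intros Hn. rewrite weight_sq.
  replace (n - 1 - (n - 1))%nat with 0%nat by lia.
  pose proof (wallis_shifted_anti n (n + (n - 1)) ltac:(lia)) as h1.
  pose proof (wallis_scaled_mono 1 (n - 1) ltac:(lia)) as h2.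
  rewrite plus_INR, minus_INR in h1 by lia. rewrite minus_INR in h2 by lia.
  simpl INR in h1, h2. simpl wallis in h2 |- *.
  pose proof (wallis_pos (n + (n - 1))); pose proof (wallis_pos n);
  pose proof (wallis_pos (n - 1)).
  assert (HnR : 2 <= INR n) by (apply (le_INR 2); lia).
  set (X := wallis (n + (n - 1)) ^ 2) in *. set (Z := wallis n ^ 2) in *.
  set (V := wallis (n - 1) ^ 2) in *.
  assert (0 < Z) by (unfold Z; nra). assert (0 < V) by (unfold V; nra).
  assert (0 < X) by (unfold X; nra).
  assert (X <= Z) by nra.
  assert (1 <= 4 * (INR n - 1) * V) by nra.
  apply <- Rle_div_l; [| nra]. nra.
Qed.

Lemma sin_lipschitz (a c : R) : Rabs (sin a - sin c) <= Rabs (a - c).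
Proof.
  destruct (Rtotal_order a c) as [H | [H | H]].
  - destruct (MVT_cor2 sin cos a c H (fun x _ => derivable_pt_lim_sin x)) as [x [Hx _]].
    rewrite <- Rabs_Ropp, Ropp_minus_distr, Hx, <- (Rabs_Ropp (a - c)), Ropp_minus_distr.
    rewrite Rabs_mult. pose proof (COS_bound x). pose proof (Rabs_pos (c - a)).
    assert (Rabs (cos x) <= 1) by (apply Rabs_le; lra). nra.
  - subst. rewrite !Rminus_diag, Rabs_R0. lra.
  - destruct (MVT_cor2 sin cos c a H (fun x _ => derivable_pt_lim_sin x)) as [x [Hx _]].
    rewrite Hx, Rabs_mult. pose proof (COS_bound x). pose proof (Rabs_pos (a - c)).
    assert (Rabs (cos x) <= 1) by (apply Rabs_le; lra). nra.
Qed.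

Lemma sin_increment_bounds (a c : R) : 0 <= a -> a < c -> c <= PI/2 ->
  cos c * (c - a) <= sin c - sin a <= cos a * (c - a).
Proof.
  intros Ha Hac Hc. pose proof PI_RGT_0.
  destruct (MVT_cor2 sin cos a c Hac (fun x _ => derivable_pt_lim_sin x))
    as [x [Hx [H1 H2]]].
  rewrite Hx.
  pose proof (cos_decreasing_1 x c ltac:(lra) ltac:(lra) ltac:(lra) ltac:(lra) H2).
  pose proof (cos_decreasing_1 a x ltac:(lra) ltac:(lra) ltac:(lra) ltac:(lra) H1).
  split; nra.
Qed.

Lemma asin_nonneg (x : R) : 0 <= x <= 1 -> 0 <= asin x <= PI/2.
Proof.
  intros Hx. pose proof (asin_bound x). split; [| lra].
  destruct (Rle_lt_dec 0 (asin x)); auto.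
  pose proof PI_RGT_0.
  pose proof (sin_lt_0_var (asin x) ltac:(lra) r). rewrite sin_asin in H1; lra.
Qed.

Definition node (n k : nat) : R := INR k / INR n.
Definition angle (n k : nat) : R := asin (node n k).

Lemma node_range (n k : nat) : (1 <= n)%nat -> (k <= n)%nat -> 0 <= node n k <= 1.
Proof.
  intros Hn Hk. unfold node. pose proof (le_INR 1 n Hn). pose proof (pos_INR k).
  apply le_INR in Hk. simpl INR in *. split.
  - unfold Rdiv; apply Rmult_le_pos; [lra | left; apply Rinv_0_lt_compat; lra].
  - apply <- Rle_div_l; lra.
Qed.

Lemma node_S (n k : nat) : (1 <= n)%nat -> node n (S k) = node n k + / INR n.
Proof.
  intros Hn. unfold node. rewrite S_INR. pose proof (le_INR 1 n Hn). simpl INR in *.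
  field. lra.
Qed.

Lemma angle_range (n k : nat) : (1 <= n)%nat -> (k <= n)%nat -> 0 <= angle n k <= PI/2.
Proof. intros. apply asin_nonneg, node_range; auto. Qed.

Lemma sin_angle (n k : nat) : (1 <= n)%nat -> (k <= n)%nat -> sin (angle n k) = node n k.
Proof. intros. unfold angle. apply sin_asin. pose proof (node_range n k H H0). lra. Qed.

Lemma cos_angle_sq (n k : nat) : (1 <= n)%nat -> (k <= n)%nat ->
  cos (angle n k) ^ 2 = 1 - node n k ^ 2.
Proof.
  intros. rewrite <- (sin_angle n k) by auto. pose proof (sin2_cos2 (angle n k)).
  unfold Rsqr in H1. nra.
Qed.

Lemma angle_0 (n : nat) : angle n 0 = 0.
Proof. unfold angle, node. simpl. unfold Rdiv. rewrite Rmult_0_l. apply asin_0. Qed.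

Lemma angle_n (n : nat) : (1 <= n)%nat -> angle n n = PI/2.
Proof.
  intros. unfold angle, node. pose proof (le_INR 1 n H). simpl INR in *.
  rewrite Rdiv_diag by lra. apply asin_1.
Qed.

Lemma angle_lt (n k : nat) : (1 <= n)%nat -> (S k <= n)%nat -> angle n k < angle n (S k).
Proof.
  intros Hn Hk.
  destruct (Rlt_le_dec (angle n k) (angle n (S k))) as [| H]; auto.
  pose proof (angle_range n k Hn ltac:(lia)); pose proof (angle_range n (S k) Hn Hk).
  pose proof (sin_incr_1 (angle n (S k)) (angle n k)
                ltac:(lra) ltac:(lra) ltac:(lra) ltac:(lra) H).
  rewrite !sin_angle, node_S in H2 by (auto; lia).
  pose proof (le_INR 1 n Hn). simpl INR in *.
  assert (0 < / INR n) by (apply Rinv_0_lt_compat; lra). lra.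
Qed.

(* Since sin(angle) increases by exactly 1/n per step, the angle increments
   satisfy cos(theta_{k+1}) D_k <= 1/n <= cos(theta_k) D_k. *)
Lemma angle_increment (n k : nat) : (1 <= n)%nat -> (S k <= n)%nat ->
  cos (angle n (S k)) * (angle n (S k) - angle n k) <= / INR n <=
  cos (angle n k) * (angle n (S k) - angle n k).
Proof.
  intros Hn Hk.
  pose proof (angle_range n k Hn ltac:(lia)); pose proof (angle_range n (S k) Hn Hk).
  pose proof (angle_lt n k Hn Hk).
  pose proof (sin_increment_bounds (angle n k) (angle n (S k)) ltac:(lra) H1 ltac:(lra)).
  rewrite !sin_angle, node_S in H2 by (auto; lia). lra.
Qed.

Lemma angle_last (n : nat) : (2 <= n)%nat -> PI/2 - sqrt (3 / INR n) <= angle n (n - 1).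
Proof.
  intros Hn. pose proof (le_INR 2 n Hn). simpl INR in H.
  pose proof (angle_range n (n - 1) ltac:(lia) ltac:(lia)) as Hr.
  set (t := PI/2 - angle n (n - 1)).
  assert (Ht : 0 <= t <= PI/2) by (unfold t; lra).
  assert (Hc : cos t = 1 - / INR n).
  { unfold t. rewrite cos_shift, sin_angle by lia. unfold node.
    rewrite minus_INR by lia. simpl. field. lra. }
  pose proof PI_4.
  destruct (cos_bound t 0 ltac:(lra) ltac:(lra)) as [_ Hcb].
  replace (cos_approx t (2 * (0 + 1))) with (1 - t ^ 2 / 2 + t ^ 4 / 24) in Hcb
    by (unfold cos_approx, cos_term; simpl; field).
  assert (t ^ 2 <= 4) by nra.
  assert (t ^ 4 <= 4 * t ^ 2)
    by (replace (t ^ 4) with (t ^ 2 * t ^ 2) by ring; apply Rmult_le_compat_r; nra).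
  assert (Ht2 : t ^ 2 * INR n <= 3).
  { rewrite Hc in Hcb.
    assert (t ^ 2 / 3 <= / INR n) by lra.
    apply Rmult_le_compat_r with (r := INR n) in H3; [| lra].
    rewrite Rinv_l in H3 by lra. lra. }
  assert (t <= sqrt (3 / INR n)).
  { rewrite <- (sqrt_pow2 t) by lra. apply sqrt_le_1_alt. apply -> Rle_div_r; lra. }
  unfold t in *. lra.
Qed.

(* Squared form of angle_increment, using cos^2 theta_k = 1 - (k/n)^2. *)
Lemma angle_increment_sq (n k : nat) : (1 <= n)%nat -> (S k <= n)%nat ->
  (INR n ^ 2 - (INR k + 1) ^ 2) * (angle n (S k) - angle n k) ^ 2 <= 1 <=
  (INR n ^ 2 - INR k ^ 2) * (angle n (S k) - angle n k) ^ 2.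
Proof.
  intros Hn Hk. pose proof (le_INR 1 n Hn). simpl INR in H.
  pose proof (angle_increment n k Hn Hk) as [Hup Hlo].
  pose proof (angle_lt n k Hn Hk).
  pose proof (angle_range n k Hn ltac:(lia)); pose proof (angle_range n (S k) Hn Hk).
  pose proof (cos_ge_0 (angle n k) ltac:(lra) ltac:(lra)).
  pose proof (cos_ge_0 (angle n (S k)) ltac:(lra) ltac:(lra)).
  pose proof (cos_angle_sq n k Hn ltac:(lia)) as Ck.
  pose proof (cos_angle_sq n (S k) Hn Hk) as Ck1.
  unfold node in Ck, Ck1. rewrite S_INR in Ck1.
  set (D := angle n (S k) - angle n k) in *.
  assert (Hup' : cos (angle n (S k)) * D * INR n <= 1).
  { apply Rmult_le_compat_r with (r := INR n) in Hup; [| lra].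
    rewrite Rinv_l in Hup by lra. lra. }
  assert (Hlo' : 1 <= cos (angle n k) * D * INR n).
  { apply Rmult_le_compat_r with (r := INR n) in Hlo; [| lra].
    rewrite Rinv_l in Hlo by lra. lra. }
  replace ((INR n ^ 2 - (INR k + 1) ^ 2) * D ^ 2)
    with ((cos (angle n (S k)) * D * INR n) ^ 2) by (rewrite !Rpow_mult_distr, Ck1; field; lra).
  replace ((INR n ^ 2 - INR k ^ 2) * D ^ 2)
    with ((cos (angle n k) * D * INR n) ^ 2) by (rewrite !Rpow_mult_distr, Ck; field; lra).
  assert (0 <= cos (angle n (S k)) * D * INR n).
  { apply Rmult_le_pos; [apply Rmult_le_pos |]; unfold D; lra. }
  split; nra.
Qed.

Definition step (n k : nat) : R := weight n k / INR n.

Definition cum (n k : nat) : R := sum_upto (step n) k.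

(* The factor sqrt(1 - 1/(2n)) lost in the lower comparison of steps and angles. *)
Definition shrink (n : nat) : R := sqrt (1 - / (2 * INR n)).

Definition mesh (n : nat) : R := sqrt (4 / INR n).

Lemma sq_le (a c : R) : 0 <= c -> a ^ 2 <= c ^ 2 -> a <= c.
Proof. intros. nra. Qed.

Lemma shrink_facts (n : nat) : (2 <= n)%nat ->
  0 <= shrink n <= 1 /\ shrink n ^ 2 = 1 - / (2 * INR n) /\ 1 - shrink n <= / (2 * INR n).
Proof.
  intros Hn. pose proof (le_INR 2 n Hn). simpl INR in H.
  assert (0 < / (2 * INR n) <= /4).
  { split. apply Rinv_0_lt_compat; lra. apply Rinv_le_contravar; lra. }
  assert (Hs : shrink n ^ 2 = 1 - / (2 * INR n)).
  { unfold shrink. simpl. rewrite Rmult_1_r. apply sqrt_sqrt. lra. }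
  assert (0 <= shrink n) by (unfold shrink; apply sqrt_pos).
  split; [split; nra |]. split; auto. nra.
Qed.

Lemma step_pos (n k : nat) : (2 <= n)%nat -> 0 < step n k.
Proof.
  intros. unfold step. pose proof (weight_pos n k). pose proof (le_INR 2 n H).
  simpl INR in H1. apply Rdiv_lt_0_compat; lra.
Qed.

Lemma step_lower (n j : nat) : (2 <= n)%nat -> (S j < n)%nat ->
  shrink n * (angle n (S j) - angle n j) <= step n (S j).
Proof.
  intros Hn Hj. pose proof (le_INR 2 n Hn) as HnR. simpl INR in HnR.
  destruct (shrink_facts n Hn) as [Hc1 [Hc2 Hc3]].
  pose proof (angle_increment_sq n j ltac:(lia) ltac:(lia)) as [HD _].
  pose proof (angle_lt n j ltac:(lia) ltac:(lia)).
  pose proof (weight_lower n (S j) Hj) as HW. pose proof (weight_pos n (S j)).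
  assert (HK : INR (S j) + 1 <= INR n) by (rewrite <- S_INR; apply le_INR; lia).
  pose proof (pos_INR (S j)). unfold step. rewrite <- S_INR in HD.
  set (K := INR (S j)) in *. set (N := INR n) in *.
  set (D := angle n (S j) - angle n j) in *. set (a := weight n (S j)) in *.
  assert (HW2 : N * (N - /2) * D ^ 2 <= a ^ 2).
  { assert (HD2 : 0 <= D ^ 2) by nra. assert (Ha2 : 0 <= a ^ 2) by nra.
    assert (HNK : (N + K) * (N - K - /2) <= N ^ 2 - K ^ 2) by nra.
    apply Rle_trans with (a ^ 2 * ((N + K) * (N - K - /2)) * D ^ 2);
      [apply Rmult_le_compat_r; lra |].
    apply Rle_trans with (a ^ 2 * (N ^ 2 - K ^ 2) * D ^ 2).
    - apply Rmult_le_compat_r; [lra |]. apply Rmult_le_compat_l; lra.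
    - rewrite Rmult_assoc. rewrite <- (Rmult_1_r (a ^ 2)) at 2.
      apply Rmult_le_compat_l; lra. }
  apply sq_le; [left; apply Rdiv_lt_0_compat; lra |].
  replace ((shrink n * D) ^ 2) with (shrink n ^ 2 * D ^ 2) by ring. rewrite Hc2.
  replace ((a / N) ^ 2) with (a ^ 2 / N ^ 2) by (field; lra).
  replace ((1 - / (2 * N)) * D ^ 2) with (N * (N - /2) * D ^ 2 / N ^ 2) by (field; lra).
  apply Rmult_le_compat_r; [apply Rlt_le, Rinv_0_lt_compat; nra | exact HW2].
Qed.

Lemma step_upper (n k : nat) : (2 <= n)%nat -> (k + 2 <= n)%nat ->
  step n k <= angle n (S (S k)) - angle n (S k).
Proof.
  intros Hn Hk. pose proof (le_INR 2 n Hn) as HnR. simpl INR in HnR.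
  pose proof (angle_increment_sq n (S k) ltac:(lia) ltac:(lia)) as [_ HD].
  pose proof (angle_lt n (S k) ltac:(lia) ltac:(lia)).
  pose proof (weight_upper n k Hk) as HW. pose proof (weight_pos n k).
  assert (HK : INR k + 2 <= INR n).
  { replace (INR k + 2) with (INR (S (S k))) by (rewrite !S_INR; lra). apply le_INR; lia. }
  pose proof (pos_INR k). unfold step. rewrite S_INR in HD.
  set (K := INR k) in *. set (N := INR n) in *.
  set (D := angle n (S (S k)) - angle n (S k)) in *. set (a := weight n k) in *.
  assert (HDpos : 0 < D) by (unfold D; lra).
  assert (HW2 : a ^ 2 * (N ^ 2 - (K + 1) ^ 2) <= N ^ 2).
  { set (P := a ^ 2 * (N - K - 1)).
    assert (0 <= P) by (unfold P; nra).
    assert (P * (N + K + /2) <= (N + /2) * (N - 1)) by (unfold P; nra).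
    replace (a ^ 2 * (N ^ 2 - (K + 1) ^ 2)) with (P * (N + K + 1)) by (unfold P; ring).
    apply Rmult_le_reg_r with (N + K + /2); [lra |].
    apply Rle_trans with ((N + /2) * (N - 1) * (N + K + 1)); nra. }
  apply sq_le; [lra |].
  replace ((a / N) ^ 2) with (a ^ 2 / N ^ 2) by (field; lra).
  apply <- Rle_div_l; [| nra].
  assert (0 < N ^ 2 - (K + 1) ^ 2) by nra.
  apply Rmult_le_reg_r with (N ^ 2 - (K + 1) ^ 2); [lra |]. nra.
Qed.

(* s_{n,k}^2 <= 4/n: from weight_upper, and from weight_last for k = n - 1. *)
Lemma step_sq_small (n k : nat) : (2 <= n)%nat -> (k < n)%nat -> step n k ^ 2 <= 4 / INR n.
Proof.
  intros Hn Hk. pose proof (le_INR 2 n Hn) as HnR. simpl INR in HnR.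
  pose proof (weight_pos n k).
  unfold step. replace ((weight n k / INR n) ^ 2) with (weight n k ^ 2 / INR n ^ 2)
    by (field; lra).
  apply <- Rle_div_l; [| nra].
  replace (4 / INR n * INR n ^ 2) with (4 * INR n) by (field; lra).
  destruct (Nat.eq_dec k (n - 1)) as [-> | Hk'].
  - pose proof (weight_last n Hn). lra.
  - pose proof (weight_upper n k ltac:(lia)) as HW.
    assert (HK : INR k + 2 <= INR n).
    { replace (INR k + 2) with (INR (S (S k))) by (rewrite !S_INR; lra). apply le_INR; lia. }
    pose proof (pos_INR k).
    set (a := weight n k) in *. set (K := INR k) in *. set (N := INR n) in *.
    assert (a ^ 2 * (N + /2) <= a ^ 2 * ((N + K + /2) * (N - K - 1)))
      by (apply Rmult_le_compat_l; nra).
    nra.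
Qed.

Lemma step_le_mesh (n k : nat) : (2 <= n)%nat -> (k < n)%nat -> step n k <= mesh n.
Proof.
  intros Hn Hk. pose proof (step_pos n k Hn). unfold mesh.
  rewrite <- (sqrt_pow2 (step n k)) by lra. apply sqrt_le_1_alt. apply step_sq_small; auto.
Qed.

Lemma mesh_facts (n : nat) : (16 <= n)%nat ->
  mesh n <= /2 /\ sqrt (3 / INR n) <= mesh n /\ / INR n <= mesh n /\
  2 * (1 - shrink n) <= mesh n.
Proof.
  intros Hn. pose proof (le_INR 16 n Hn) as H16. simpl INR in H16.
  destruct (shrink_facts n ltac:(lia)) as [_ [_ Hc3]].
  assert (Hinv : 0 < / INR n) by (apply Rinv_0_lt_compat; lra).
  assert (Hinv2 : / INR n <= mesh n).
  { unfold mesh. rewrite <- (sqrt_pow2 (/ INR n)) by lra.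
    apply sqrt_le_1_alt. replace ((/ INR n) ^ 2) with (/ INR n * / INR n) by ring.
    unfold Rdiv. rewrite (Rmult_comm 4). apply Rmult_le_compat_l; [lra |].
    apply Rle_trans with 1; [| lra]. rewrite <- Rinv_1. apply Rinv_le_contravar; lra. }
  assert (/ (2 * INR n) = / 2 * / INR n) by (field; lra).
  repeat split; try nra.
  - unfold mesh. replace (/2) with (sqrt (/4)) by (apply sqrt_lem_1; lra).
    apply sqrt_le_1_alt. apply <- Rle_div_l; lra.
  - apply sqrt_le_1_alt. unfold Rdiv. apply Rmult_le_compat_r; lra.
Qed.

Lemma cum_S (n k : nat) : cum n (S k) = cum n k + step n k.
Proof. reflexivity. Qed.

Lemma cum_nonneg (n k : nat) : (2 <= n)%nat -> 0 <= cum n k.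
Proof.
  intros Hn. induction k; unfold cum in *; simpl; [lra |].
  pose proof (step_pos n k Hn). lra.
Qed.

Lemma cum_mono (n k m : nat) : (2 <= n)%nat -> (k <= m)%nat -> cum n k <= cum n m.
Proof.
  intros Hn. induction 1; [lra |]. rewrite cum_S. pose proof (step_pos n m Hn). lra.
Qed.

Lemma cum_upper (n k : nat) : (2 <= n)%nat -> (k <= n - 1)%nat -> cum n k <= angle n (S k).
Proof.
  intros Hn. induction k; intros Hk.
  - unfold cum; simpl. apply (angle_range n 1); lia.
  - rewrite cum_S. pose proof (step_upper n k Hn ltac:(lia)).
    specialize (IHk ltac:(lia)). lra.
Qed.

Lemma cum_lower (n j : nat) : (2 <= n)%nat -> (S j <= n)%nat ->
  shrink n * angle n j <= cum n (S j).
Proof.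
  intros Hn. induction j; intros Hj.
  - rewrite angle_0, cum_S. unfold cum; simpl. pose proof (step_pos n 0 Hn). lra.
  - rewrite cum_S. pose proof (step_lower n j Hn ltac:(lia)).
    specialize (IHj ltac:(lia)). lra.
Qed.

Lemma sin_cum_near_node (n k : nat) : (2 <= n)%nat -> (k <= n - 1)%nat ->
  Rabs (sin (cum n k) - node n k) <= / INR n + 2 * (1 - shrink n).
Proof.
  intros Hn Hk. pose proof (le_INR 2 n Hn) as HnR. simpl INR in HnR.
  destruct (shrink_facts n Hn) as [Hc1 [Hc2 Hc3]].
  assert (0 < / INR n) by (apply Rinv_0_lt_compat; lra).
  destruct k as [| j].
  - unfold cum, node. simpl. rewrite sin_0. unfold Rdiv.
    rewrite Rmult_0_l, Rminus_0_r, Rabs_R0. lra.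
  - pose proof (cum_upper n (S j) Hn Hk) as Hup.
    pose proof (cum_lower n j Hn ltac:(lia)) as Hlo.
    pose proof (angle_range n j ltac:(lia) ltac:(lia)).
    pose proof (angle_range n (S (S j)) ltac:(lia) ltac:(lia)).
    pose proof PI_RGT_0. pose proof PI_4.
    assert (Hs1 : sin (cum n (S j)) <= node n (S j) + / INR n).
    { rewrite <- node_S, <- sin_angle by lia. apply sin_incr_1; nra. }
    assert (Hs2 : sin (shrink n * angle n j) <= sin (cum n (S j)))
      by (apply sin_incr_1; nra).
    pose proof (sin_lipschitz (shrink n * angle n j) (angle n j)) as Hs3.
    rewrite sin_angle in Hs3 by lia.
    rewrite (Rabs_left1 (shrink n * angle n j - angle n j)) in Hs3 by nra.
    rewrite node_S in Hs1 |- * by lia.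
    apply Rabs_le. split; [| lra].
    assert ((1 - shrink n) * angle n j <= 2 * (1 - shrink n)) by nra.
    pose proof (Rle_abs (- (sin (shrink n * angle n j) - node n j))) as Hab.
    rewrite Rabs_Ropp in Hab. nra.
Qed.

Lemma cum_total (n : nat) : (16 <= n)%nat ->
  Rabs (cum n n - PI/2) <= 3 * mesh n /\ cum n n <= PI/2 + /2.
Proof.
  intros Hn. pose proof (le_INR 16 n Hn) as H16. simpl INR in H16.
  destruct (mesh_facts n Hn) as [Hm1 [Hm2 [Hm3 _]]].
  destruct (shrink_facts n ltac:(lia)) as [Hc1 [Hc2 Hc3]].
  assert (Hsplit : cum n n = cum n (n - 1) + step n (n - 1))
    by (rewrite <- cum_S; f_equal; lia).
  pose proof (cum_upper n (n - 1) ltac:(lia) ltac:(lia)) as Hup.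
  replace (S (n - 1)) with n in Hup by lia. rewrite angle_n in Hup by lia.
  pose proof (cum_lower n (n - 1) ltac:(lia) ltac:(lia)) as Hlo.
  replace (S (n - 1)) with n in Hlo by lia.
  pose proof (step_le_mesh n (n - 1) ltac:(lia) ltac:(lia)).
  pose proof (angle_last n ltac:(lia)) as Hlast.
  pose proof PI_4. pose proof (sqrt_pos (3 / INR n)).
  assert (shrink n * (PI/2 - sqrt (3 / INR n)) <= shrink n * angle n (n - 1))
    by (apply Rmult_le_compat_l; lra).
  assert (shrink n * sqrt (3 / INR n) <= sqrt (3 / INR n)) by nra.
  assert ((1 - shrink n) * (PI/2) <= 2 * / (2 * INR n)) by nra.
  assert (/ (2 * INR n) <= / INR n) by (apply Rinv_le_contravar; lra).
  split; [apply Rabs_le; split |]; nra.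
Qed.

Lemma abs_gt1_cases (b : R) : 1 < Rabs b -> b < -1 \/ 1 < b.
Proof.
  intros H. destruct (Rcase_abs b) as [Hb | Hb];
    [rewrite Rabs_left in H by lra | rewrite Rabs_right in H by lra]; lra.
Qed.

Lemma abs_shift_lower (b y : R) : Rabs y <= 1 -> Rabs b - 1 <= Rabs (b + y).
Proof.
  intros Hy. pose proof (Rabs_triang_inv b (- y)). rewrite Rabs_Ropp in H.
  replace (b - - y) with (b + y) in H by ring. lra.
Qed.

Lemma abs_quotient_bound (p d1 d2 A m1 m2 : R) : 0 < m1 -> 0 < m2 ->
  Rabs p <= A -> m1 <= Rabs d1 -> m2 <= Rabs d2 ->
  Rabs (p / (d1 * d2)) <= A / (m1 * m2).
Proof.
  intros H1 H2 Hp Hd1 Hd2. unfold Rdiv.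
  rewrite Rabs_mult, Rabs_inv, Rabs_mult. pose proof (Rabs_pos p).
  apply Rmult_le_compat; auto.
  - left. apply Rinv_0_lt_compat. apply Rmult_lt_0_compat; lra.
  - apply Rinv_le_contravar; [nra |]. apply Rmult_le_compat; lra.
Qed.

Definition integrand (b y : R) : R := b / (b + y).

Lemma integrand_bound (b y : R) : 1 < Rabs b -> Rabs y <= 1 ->
  Rabs (integrand b y) <= Rabs b / (Rabs b - 1).
Proof.
  intros Hb Hy. pose proof (abs_shift_lower b y Hy). unfold integrand, Rdiv.
  rewrite Rabs_mult, Rabs_inv. apply Rmult_le_compat_l; [apply Rabs_pos |].
  apply Rinv_le_contravar; lra.
Qed.

Lemma integrand_lipschitz (b y z : R) : 1 < Rabs b -> Rabs y <= 1 -> Rabs z <= 1 ->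
  Rabs (integrand b y - integrand b z) <= Rabs b / (Rabs b - 1) ^ 2 * Rabs (y - z).
Proof.
  intros Hb Hy Hz. unfold integrand.
  pose proof (abs_shift_lower b y Hy); pose proof (abs_shift_lower b z Hz).
  assert (b + y <> 0) by (intro E; rewrite E, Rabs_R0 in H; lra).
  assert (b + z <> 0) by (intro E; rewrite E, Rabs_R0 in H0; lra).
  replace (b / (b + y) - b / (b + z)) with (b * (z - y) / ((b + y) * (b + z)))
    by (field; auto).
  replace (Rabs b / (Rabs b - 1) ^ 2 * Rabs (y - z))
    with (Rabs b * Rabs (y - z) / ((Rabs b - 1) * (Rabs b - 1))) by (field; lra).
  apply abs_quotient_bound; try lra.
  rewrite Rabs_mult, (Rabs_minus_sym z y). lra.
Qed.

Lemma integrand_param_lipschitz (b beta x : R) : 1 < Rabs b ->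
  Rabs (beta - b) <= (Rabs b - 1) / 2 -> 0 <= x <= 1 ->
  Rabs (integrand beta x - integrand b x) <= 2 / (Rabs b - 1) ^ 2 * Rabs (beta - b).
Proof.
  intros Hb Hbeta Hx. unfold integrand.
  assert (Hx1 : Rabs x <= 1) by (rewrite Rabs_right; lra).
  pose proof (abs_shift_lower b x Hx1).
  assert (H1 : (Rabs b - 1) / 2 <= Rabs (beta + x)).
  { pose proof (Rabs_triang_inv (b + x) (b - beta)).
    replace (b + x - (b - beta)) with (beta + x) in H0 by ring.
    rewrite (Rabs_minus_sym b beta) in H0. lra. }
  assert (beta + x <> 0) by (intro E; rewrite E, Rabs_R0 in H1; lra).
  assert (b + x <> 0) by (intro E; rewrite E, Rabs_R0 in H; lra).
  replace (beta / (beta + x) - b / (b + x)) with (x * (beta - b) / ((beta + x) * (b + x)))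
    by (field; auto).
  replace (2 / (Rabs b - 1) ^ 2 * Rabs (beta - b))
    with (Rabs (beta - b) / ((Rabs b - 1) / 2 * (Rabs b - 1))) by (field; lra).
  apply abs_quotient_bound; try lra.
  rewrite Rabs_mult. pose proof (Rabs_pos (beta - b)).
  rewrite <- (Rmult_1_l (Rabs (beta - b))) at 2. apply Rmult_le_compat_r; lra.
Qed.

Definition sb (b : R) : R := sqrt (b ^ 2 - 1).

Lemma sb_facts (b : R) : 1 < Rabs b -> 0 < sb b /\ sb b * sb b = b * b - 1.
Proof.
  intros Hb. assert (1 < b * b) by (destruct (abs_gt1_cases b Hb); nra).
  unfold sb. split.
  - apply sqrt_lt_R0. nra.
  - rewrite sqrt_sqrt; nra.
Qed.

(* An antiderivative of t |-> phi_b(sin t) on (-pi, pi), via the substitution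
   u = tan(t/2):  G_b(t) = (2b/s_b) atan((b tan(t/2) + 1) / s_b). *)
Definition antider (b t : R) : R :=
  2 * b / sb b * atan ((b * (sin (t / 2) / cos (t / 2)) + 1) / sb b).

(* The algebra behind G_b' = phi_b o sin, with sn = sin(t/2), c = cos(t/2). *)
Lemma antider_deriv_identity (b s c sn : R) :
  s * s = b * b - 1 -> sn * sn + c * c = 1 -> 0 < s -> c <> 0 -> b <> 0 ->
  b + 2 * sn * c <> 0 ->
  2 * b / s * ((b * (/2 * c * /c + sn * (- (/2 * - sn) * /(c * c))) * /s)
               * /(1 + ((b * (sn / c) + 1) / s) ^ 2))
  = b / (b + 2 * sn * c).
Proof.
  intros Hs Hsc Hs0 Hc Hb Hd.
  replace (/2 * c * /c + sn * (- (/2 * - sn) * /(c * c)))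
    with ((c * c + sn * sn) / (2 * c * c)) by (field; auto).
  replace (c * c + sn * sn) with 1 by lra.
  replace (1 + ((b * (sn / c) + 1) / s) ^ 2)
    with ((s * s * (c * c) + (b * sn + c) ^ 2) / (s * s * (c * c))) by (field; split; lra).
  rewrite Hs.
  assert (E : b * b * (sn * sn + c * c) = b * b * 1) by (rewrite Hsc; ring).
  replace ((b * b - 1) * (c * c) + (b * sn + c) ^ 2) with (b * (b + 2 * sn * c)) by nra.
  rewrite <- Hs. field. repeat split; lra.
Qed.

(* G_b' = phi_b o sin on (-pi, pi), where cos(t/2) > 0. *)
Lemma antider_deriv (b t : R) : 1 < Rabs b -> - PI < t < PI ->
  derivable_pt_lim (antider b) t (integrand b (sin t)).
Proof.
  intros Hb Ht. destruct (sb_facts b Hb) as [Hs0 Hs].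
  assert (Hc : 0 < cos (t / 2)) by (apply cos_gt_0; lra).
  assert (Hb0 : b <> 0) by (intro; subst; rewrite Rabs_R0 in Hb; lra).
  assert (Hsin : b + sin t <> 0).
  { pose proof (SIN_bound t). destruct (abs_gt1_cases b Hb); lra. }
  set (h := fun x => (b * (sin (x / 2) / cos (x / 2)) + 1) / sb b).
  set (dh := (b * (/2 * cos (t * /2) * /cos (t * /2) + sin (t * /2)
               * (- (/2 * - sin (t * /2)) * /(cos (t * /2) * cos (t * /2)))) * /sb b)).
  assert (Hh : is_derive h t dh).
  { unfold h, dh. auto_derive. unfold Rdiv in Hc; lra. ring. }
  assert (Ha : is_derive atan (h t) (/ (1 + (h t) ^ 2)))
    by (apply is_derive_Reals, derivable_pt_lim_atan).
  pose proof (is_derive_comp _ _ _ _ _ Ha Hh) as Hcomp.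
  apply is_derive_Reals in Hcomp.
  pose proof (derivable_pt_lim_scal _ (2 * b / sb b) _ _ Hcomp) as Hsc.
  replace (integrand b (sin t)) with (2 * b / sb b * (dh * / (1 + (h t) ^ 2))); [exact Hsc |].
  unfold h, dh, integrand. change (t * / 2) with (t / 2).
  replace (sin t) with (2 * sin (t / 2) * cos (t / 2))
    by (rewrite <- sin_2a; f_equal; field).
  apply antider_deriv_identity; auto; try lra.
  - pose proof (sin2_cos2 (t / 2)). unfold Rsqr in H. lra.
  - rewrite <- sin_2a. replace (2 * (t / 2)) with t by field. auto.
Qed.

Lemma antider_lipschitz (b x y : R) : 1 < Rabs b -> - PI < x < PI -> - PI < y < PI ->
  Rabs (antider b x - antider b y) <= Rabs b / (Rabs b - 1) * Rabs (x - y).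
Proof.
  intros Hb Hx Hy.
  assert (Hmvt : forall p q, - PI < p -> p < q -> q < PI ->
    Rabs (antider b q - antider b p) <= Rabs b / (Rabs b - 1) * Rabs (q - p)).
  { intros p q Hp Hpq Hq.
    destruct (MVT_cor2 (antider b) (fun t => integrand b (sin t)) p q Hpq
                (fun t Ht => antider_deriv b t Hb ltac:(lra))) as [t [Ht _]].
    rewrite Ht, Rabs_mult. apply Rmult_le_compat_r; [apply Rabs_pos |].
    apply integrand_bound; auto. apply Rabs_le, SIN_bound. }
  destruct (Rtotal_order x y) as [H | [H | H]].
  - rewrite <- Rabs_Ropp, Ropp_minus_distr, <- (Rabs_Ropp (x - y)), Ropp_minus_distr.
    apply Hmvt; lra.
  - subst. rewrite !Rminus_diag, Rabs_R0. lra.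
  - apply Hmvt; lra.
Qed.

Lemma atan_sub (a c : R) : 0 < 1 + a * c -> atan a - atan c = atan ((a - c) / (1 + a * c)).
Proof.
  intros H. pose proof (atan_bound a); pose proof (atan_bound c).
  set (al := atan a) in *. set (ga := atan c) in *.
  assert (Ca : 0 < cos al) by (apply cos_gt_0; lra).
  assert (Cg : 0 < cos ga) by (apply cos_gt_0; lra).
  assert (Ta : tan al = a) by apply tan_atan.
  assert (Tg : tan ga = c) by apply tan_atan.
  assert (Sa : sin al = a * cos al) by (rewrite <- Ta; unfold tan; field; lra).
  assert (Sg : sin ga = c * cos ga) by (rewrite <- Tg; unfold tan; field; lra).
  assert (Cd : 0 < cos (al - ga)).
  { rewrite cos_minus, Sa, Sg.
    replace (cos al * cos ga + a * cos al * (c * cos ga))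
      with (cos al * cos ga * (1 + a * c)) by ring.
    apply Rmult_lt_0_compat; [apply Rmult_lt_0_compat |]; lra. }
  pose proof PI_RGT_0.
  assert (Hd : - (PI/2) < al - ga < PI/2).
  { split.
    - destruct (Rlt_le_dec (- (PI/2)) (al - ga)) as [| Hle]; auto.
      rewrite <- cos_neg in Cd.
      pose proof (cos_le_0 (- (al - ga)) ltac:(lra) ltac:(lra)). lra.
    - destruct (Rlt_le_dec (al - ga) (PI/2)) as [| Hle]; auto.
      pose proof (cos_le_0 (al - ga) ltac:(lra) ltac:(lra)). lra. }
  rewrite <- (atan_tan (al - ga) Hd). f_equal.
  rewrite tan_minus; try lra; rewrite Ta, Tg; [reflexivity | lra].
Qed.

Lemma antider_increment (b : R) : 1 < Rabs b ->
  antider b (PI/2) - antider b 0 = 2 * b / sb b * atan ((b - 1) / sb b).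
Proof.
  intros Hb. destruct (sb_facts b Hb) as [Hs0 Hs]. set (s := sb b) in *.
  unfold antider. fold s.
  replace (PI / 2 / 2) with (PI / 4) by field.
  rewrite sin_PI4, cos_PI4. replace (0 / 2) with 0 by field. rewrite sin_0, cos_0.
  assert (Hsq : 0 < sqrt 2) by (apply sqrt_lt_R0; lra).
  replace ((b * (1 / sqrt 2 / (1 / sqrt 2)) + 1) / s) with ((b + 1) / s) by (field; lra).
  replace ((b * (0 / 1) + 1) / s) with (1 / s) by (field; lra).
  rewrite <- Rmult_minus_distr_l. f_equal.
  assert (Hb1 : b - 1 <> 0) by (destruct (abs_gt1_cases b Hb); lra).
  assert (Heq : 1 + (b + 1) / s * (1 / s) = b / (b - 1)).
  { replace (1 + (b + 1) / s * (1 / s)) with (1 + (b + 1) / (s * s)) by (field; lra).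
    rewrite Hs. field. split; [lra |]. destruct (abs_gt1_cases b Hb); nra. }
  assert (Hpos : 0 < 1 + (b + 1) / s * (1 / s)).
  { rewrite Heq. destruct (abs_gt1_cases b Hb).
    - replace (b / (b - 1)) with ((- b) / (- (b - 1))) by (field; lra).
      apply Rdiv_lt_0_compat; lra.
    - apply Rdiv_lt_0_compat; lra. }
  rewrite (atan_sub _ _ Hpos), Heq. f_equal.
  field. repeat split; try lra. destruct (abs_gt1_cases b Hb); lra.
Qed.

Lemma sqrt_quotient (p q s : R) : 0 < p * q -> 0 < s -> s * s = p * q ->
  sqrt (p / q) = Rabs p / s.
Proof.
  intros Hpq Hs Hss.
  assert (Hq : q <> 0) by (intro; subst; lra).
  apply sqrt_lem_1.
  - replace (p / q) with (p * q / (q * q)) by (field; auto).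
    apply Rlt_le, Rdiv_lt_0_compat; [lra | nra].
  - apply Rlt_le, Rdiv_lt_0_compat; [apply Rabs_pos_lt; intro; subst; lra | lra].
  - replace (Rabs p / s * (Rabs p / s)) with (Rabs p ^ 2 / (s * s)) by (field; lra).
    rewrite pow2_abs, Hss. field. split; auto. intro; subst; lra.
Qed.

Lemma antider_endpoints (b : R) : 1 < Rabs b ->
  antider b (PI/2) - antider b 0 =
  2 * b / (b + 1) * sqrt ((b + 1) / (b - 1)) * atan (sqrt ((b - 1) / (b + 1))).
Proof.
  intros Hb. destruct (sb_facts b Hb) as [Hs0 Hs].
  rewrite antider_increment by exact Hb.
  assert (Hprod : 0 < (b + 1) * (b - 1)) by (destruct (abs_gt1_cases b Hb); nra).
  rewrite (sqrt_quotient (b + 1) (b - 1) (sb b)), (sqrt_quotient (b - 1) (b + 1) (sb b))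
    by (auto; nra).
  destruct (abs_gt1_cases b Hb).
  - rewrite !Rabs_left by lra.
    replace (- (b - 1) / sb b) with (- ((b - 1) / sb b)) by (field; lra).
    rewrite atan_opp. field. split; lra.
  - rewrite !Rabs_right by lra. field. split; lra.
Qed.

(* The Riemann-sum estimate: sum_k s_{n,k} phi_b(k/n) is G_b(S_n) - G_b(0) up to
   O(mesh), since phi_b(k/n) is within O(mesh) of phi_b o sin on [S_k, S_{k+1}]. *)
Lemma riemann_sum_error (b : R) (n : nat) : 1 < Rabs b -> (16 <= n)%nat ->
  Rabs (sum_upto (fun k => step n k * integrand b (node n k)) n
        - (antider b (cum n n) - antider b 0))
  <= Rabs b / (Rabs b - 1) ^ 2 * (/ INR n + 2 * (1 - shrink n) + mesh n) * cum n n.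
Proof.
  intros Hb Hn.
  replace (antider b 0) with (antider b (cum n 0)) by reflexivity.
  apply (sum_upto_near_telescope _ (fun k => antider b (cum n k)) (step n)).
  intros k Hk. rewrite cum_S.
  pose proof (step_pos n k ltac:(lia)) as Hs.
  pose proof (cum_nonneg n k ltac:(lia)).
  pose proof (cum_mono n (S k) n ltac:(lia) Hk) as Hmono. rewrite cum_S in Hmono.
  destruct (cum_total n Hn) as [_ Htot]. pose proof PI2_1.
  destruct (MVT_cor2 (antider b) (fun t => integrand b (sin t)) (cum n k) (cum n k + step n k)
              ltac:(lra) (fun t Ht => antider_deriv b t Hb ltac:(lra))) as [t [Ht Htr]].
  rewrite Ht. replace (cum n k + step n k - cum n k) with (step n k) by ring.
  replace (step n k * integrand b (node n k) - integrand b (sin t) * step n k)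
    with (step n k * (integrand b (node n k) - integrand b (sin t))) by ring.
  rewrite Rabs_mult, (Rabs_right (step n k)) by lra.
  rewrite (Rmult_comm _ (step n k)). apply Rmult_le_compat_l; [lra |].
  pose proof (node_range n k ltac:(lia) ltac:(lia)).
  eapply Rle_trans.
  { apply integrand_lipschitz; auto;
      [rewrite Rabs_right; lra | apply Rabs_le, SIN_bound]. }
  apply Rmult_le_compat_l; [apply Rlt_le, Rdiv_lt_0_compat; [lra | nra] |].
  pose proof (sin_cum_near_node n k ltac:(lia) ltac:(lia)) as Hnear.
  pose proof (sin_lipschitz t (cum n k)) as Hlip.
  rewrite (Rabs_right (t - cum n k)) in Hlip by lra.
  pose proof (step_le_mesh n k ltac:(lia) Hk).
  replace (node n k - sin t) with (- (sin (cum n k) - node n k) - (sin t - sin (cum n k)))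
    by ring.
  eapply Rle_trans; [apply Rabs_triang |]. rewrite !Rabs_Ropp. lra.
Qed.

Lemma riemann_sum_param (b beta : R) (n : nat) : 1 < Rabs b -> (2 <= n)%nat ->
  Rabs (beta - b) <= (Rabs b - 1) / 2 ->
  Rabs (sum_upto (fun k => step n k * integrand beta (node n k)) n
        - sum_upto (fun k => step n k * integrand b (node n k)) n)
  <= 2 / (Rabs b - 1) ^ 2 * Rabs (beta - b) * cum n n.
Proof.
  intros Hb Hn Hbeta.
  rewrite sum_upto_minus. unfold cum. rewrite <- sum_upto_scal.
  apply sum_upto_abs_le. intros k Hk.
  pose proof (step_pos n k Hn).
  replace (step n k * integrand beta (node n k) - step n k * integrand b (node n k))
    with (step n k * (integrand beta (node n k) - integrand b (node n k))) by ring.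
  rewrite Rabs_mult, Rabs_right, Rmult_comm by lra.
  apply Rmult_le_compat_r; [lra |].
  apply integrand_param_lipschitz; auto. apply node_range; lia.
Qed.

Lemma f43_as_riemann_sum (n : nat) (c : R) : (2 <= n)%nat ->
  (forall j, (j < n)%nat -> c + INR j <> 0) ->
  / INR n * F43_trunc 1 (INR n + /2) (1 - INR n) c (INR n + 1) (3/2 - INR n) (c + 1) 1 n
  = sum_upto (fun k => step n k * integrand (c / INR n) (node n k)) n.
Proof.
  intros Hn Hc. pose proof (le_INR 2 n Hn) as HnR. simpl INR in HnR.
  unfold F43_trunc. rewrite fold_right_map_seq.
  change (fun k => poch 1 k * poch (INR n + /2) k * poch (1 - INR n) k * poch c k
          / (poch (INR n + 1) k * poch (3/2 - INR n) k * poch (c + 1) k) * 1 ^ k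
          / INR (fact k)) with (f43_term n c).
  rewrite <- sum_upto_scal. apply sum_upto_ext. intros k Hk.
  rewrite f43_term_closed by (auto; intros; apply Hc; lia).
  assert (c + INR k <> 0) by (apply Hc; lia).
  unfold step, integrand, node. field. split; [lra | auto].
Qed.

(* For beta = c/n near b (so |beta| > 1), none of the parameters c + j, j < n,
   of the 4F3 vanishes. *)
Lemma f43_params_nonzero (b : R) (n : nat) (c : R) : 1 < Rabs b -> (1 <= n)%nat ->
  Rabs (c / INR n - b) <= (Rabs b - 1) / 2 -> forall j, (j < n)%nat -> c + INR j <> 0.
Proof.
  intros Hb Hn Hbeta j Hj E. pose proof (le_INR 1 n Hn) as HnR. simpl INR in HnR.
  set (beta := c / INR n) in *.
  assert (Hfar : 1 < Rabs beta).
  { pose proof (Rabs_triang_inv b (b - beta)).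
    replace (b - (b - beta)) with beta in H by ring.
    rewrite (Rabs_minus_sym b beta) in H. lra. }
  pose proof (node_range n j Hn ltac:(lia)).
  pose proof (abs_shift_lower beta (node n j) ltac:(rewrite Rabs_right; lra)) as Hsh.
  replace (beta + node n j) with ((c + INR j) / INR n) in Hsh
    by (unfold beta, node; field; lra).
  rewrite E in Hsh. unfold Rdiv in Hsh. rewrite Rmult_0_l, Rabs_R0 in Hsh. lra.
Qed.

Lemma f43_error_bound (b : R) (n : nat) (c : R) : 1 < Rabs b -> (16 <= n)%nat ->
  Rabs (c / INR n - b) <= (Rabs b - 1) / 2 ->
  Rabs (/ INR n * F43_trunc 1 (INR n + /2) (1 - INR n) c (INR n + 1) (3/2 - INR n) (c + 1) 1 n
        - (antider b (PI/2) - antider b 0))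
  <= 6 / (Rabs b - 1) ^ 2 * Rabs (c / INR n - b)
     + (9 * (Rabs b / (Rabs b - 1) ^ 2) + 3 * (Rabs b / (Rabs b - 1))) * mesh n.
Proof.
  intros Hb Hn Hbeta. pose proof (le_INR 16 n Hn) as H16. simpl INR in H16.
  rewrite f43_as_riemann_sum by (lia || exact (f43_params_nonzero b n c Hb ltac:(lia) Hbeta)).
  set (beta := c / INR n) in *.
  set (Lb := Rabs b / (Rabs b - 1) ^ 2). set (M := Rabs b / (Rabs b - 1)).
  assert (HLb : 0 <= Lb) by (apply Rlt_le, Rdiv_lt_0_compat; [lra | nra]).
  assert (HM : 0 <= M) by (apply Rlt_le, Rdiv_lt_0_compat; lra).
  destruct (mesh_facts n Hn) as [_ [_ [Hm3 Hm4]]].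
  destruct (cum_total n Hn) as [Htot Htot']. pose proof (cum_nonneg n n ltac:(lia)).
  pose proof PI_4. pose proof PI2_1.
  pose proof (riemann_sum_param b beta n Hb ltac:(lia) Hbeta) as Hparam.
  pose proof (riemann_sum_error b n Hb Hn) as Hriem. fold Lb in Hriem.
  pose proof (antider_lipschitz b (cum n n) (PI/2) Hb ltac:(lra) ltac:(lra)) as Hend.
  fold M in Hend.
  assert (Hparam_le : 2 / (Rabs b - 1) ^ 2 * Rabs (beta - b) * cum n n
               <= 6 / (Rabs b - 1) ^ 2 * Rabs (beta - b)).
  { replace (6 / (Rabs b - 1) ^ 2 * Rabs (beta - b))
      with (2 / (Rabs b - 1) ^ 2 * Rabs (beta - b) * 3) by (field; lra).
    apply Rmult_le_compat_l; [| lra].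
    apply Rmult_le_pos; [apply Rlt_le, Rdiv_lt_0_compat; nra | apply Rabs_pos]. }
  assert (Hriem_le : Lb * (/ INR n + 2 * (1 - shrink n) + mesh n) * cum n n <= 9 * Lb * mesh n).
  { replace (9 * Lb * mesh n) with (Lb * (3 * mesh n) * 3) by ring.
    assert (0 <= / INR n) by (apply Rlt_le, Rinv_0_lt_compat; lra).
    destruct (shrink_facts n ltac:(lia)) as [[_ Hc] _].
    apply Rmult_le_compat; try lra; [apply Rmult_le_pos; lra | apply Rmult_le_compat_l; lra]. }
  assert (Hend_le : M * Rabs (cum n n - PI/2) <= 3 * M * mesh n) by nra.
  (* Split the error: change of parameter, Riemann-sum error, and S_n versus pi/2. *)
  match goal with |- Rabs (?S1 - _) <= _ =>
    replace (S1 - (antider b (PI/2) - antider b 0))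
      with ((S1 - sum_upto (fun k => step n k * integrand b (node n k)) n)
            + (sum_upto (fun k => step n k * integrand b (node n k)) n
               - (antider b (cum n n) - antider b 0))
            + (antider b (cum n n) - antider b (PI/2))) by ring end.
  eapply Rle_trans; [apply Rabs_triang |].
  eapply Rle_trans; [apply Rplus_le_compat_r, Rabs_triang |].
  lra.
Qed.

Lemma inv_INR_lim : is_lim_seq (fun n => / INR n) 0.
Proof.
  change (Finite 0) with (Rbar_inv p_infty).
  apply is_lim_seq_inv; [apply is_lim_seq_INR | discriminate].
Qed.

Lemma mesh_lim : is_lim_seq mesh 0.
Proof.
  assert (H : is_lim_seq (fun n => 4 * / INR n) 0).
  { replace 0 with (4 * 0) by ring. apply (is_lim_seq_scal_l _ 4 0), inv_INR_lim. }
  rewrite <- sqrt_0.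
  exact (filterlim_comp _ _ _ (fun n => 4 * / INR n) sqrt _ (locally 0) _ H (continuous_sqrt 0)).
Qed.

Lemma param_lim (bs : nat -> R) (b : R) (r : nat) : is_lim_seq bs b ->
  is_lim_seq (fun n => (bs n * INR n + INR r) / INR n) b.
Proof.
  intros Hbs.
  apply (is_lim_seq_ext_loc (fun n => bs n + INR r * / INR n)).
  - exists 1%nat. intros n Hn. pose proof (le_INR 1 n Hn). simpl INR in *. field. lra.
  - replace b with (b + INR r * 0) by ring.
    apply is_lim_seq_plus'; [exact Hbs |].
    apply (is_lim_seq_scal_l _ (INR r) 0), inv_INR_lim.
Qed.

Lemma eventually_near (y : nat -> R) (b eps : R) : is_lim_seq y b -> 0 < eps ->
  eventually (fun n => Rabs (y n - b) <= eps).
Proof.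
  intros Hy Heps. apply is_lim_seq_spec in Hy.
  destruct (Hy (mkposreal eps Heps)) as [N HN].
  exists N. intros n Hn. apply Rlt_le, HN, Hn.
Qed.

Lemma lim_of_error_bound (x y e : nat -> R) (L b C1 C2 : R) :
  is_lim_seq y b -> is_lim_seq e 0 ->
  eventually (fun n => Rabs (x n - L) <= C1 * Rabs (y n - b) + C2 * e n) ->
  is_lim_seq x L.
Proof.
  intros Hy He Hx.
  assert (Hdev : is_lim_seq (fun n => x n - L) 0).
  { apply is_lim_seq_abs_0.
    apply (is_lim_seq_le_le_loc (fun _ => 0) _ (fun n => C1 * Rabs (y n - b) + C2 * e n)).
    - apply (filter_imp _ _ (fun n Hn => conj (Rabs_pos (x n - L)) Hn) Hx).
    - apply is_lim_seq_const.
    - replace 0 with (C1 * 0 + C2 * 0) by ring.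
      apply is_lim_seq_plus'; [| exact (is_lim_seq_scal_l e C2 0 He)].
      apply (is_lim_seq_scal_l (fun n => Rabs (y n - b)) C1 0).
      apply (is_lim_seq_abs_0 (fun n => y n - b)).
      replace 0 with (b - b) by ring.
      apply is_lim_seq_minus'; [exact Hy | apply is_lim_seq_const]. }
  pose proof (is_lim_seq_plus' _ _ 0 L Hdev (is_lim_seq_const L)) as Hsum.
  rewrite Rplus_0_l in Hsum.
  revert Hsum. apply is_lim_seq_ext. intros n. ring.
Qed.

Theorem lemma18 (b : R) (r : nat) (bs : nat -> R)
  (hb : 1 < Rabs b) (hbs : Un_cv bs b) :
  Un_cv
    (fun n : nat =>
       / INR n *
       F43_trunc 1 (INR n + /2) (1 - INR n) (bs n * INR n + INR r)
                 (INR n + 1) (3/2 - INR n) (bs n * INR n + INR r + 1)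
                 1 n)
    (2 * b / (b + 1) * sqrt ((b + 1) / (b - 1))
       * atan (sqrt ((b - 1) / (b + 1)))).
Proof.
  apply is_lim_seq_Reals in hbs. apply is_lim_seq_Reals.
  rewrite <- (antider_endpoints b hb).
  pose proof (param_lim bs b r hbs) as Hbeta.
  apply (lim_of_error_bound _ _ _ _ _ (6 / (Rabs b - 1) ^ 2)
           (9 * (Rabs b / (Rabs b - 1) ^ 2) + 3 * (Rabs b / (Rabs b - 1))) Hbeta mesh_lim).
  assert (Hlarge : eventually (fun n => (16 <= n)%nat)) by (exists 16%nat; auto).
  pose proof (eventually_near _ _ ((Rabs b - 1) / 2) Hbeta ltac:(lra)) as Hnear.
  apply (filter_imp _ _ (fun n Hn => f43_error_bound b n _ hb (proj1 Hn) (proj2 Hn))).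
  exact (filter_and _ _ Hlarge Hnear).
Qed.
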